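(* For $n\ge1$, $\left| \Pi_n \wr C_2 (1^11^1, 1^11^2, 1^21^1, 1^12^2)\right|=n+1$.
   Context: For $n\ge0$ let $[n]=\{1,\dots,n\}$. A $2$-colored set partition of $[n]$ is a set partition of $[n]$ together with an assignment of a color from $\{1,2\}$ to each element; $\Pi_n\wr C_2$ is the set of these. For a set $S$ of patterns, $\Pi_n\wr C_2(S)$ is the set of such colored partitions avoiding every pattern in $S$ in the pattern sense. For the patterns used here: $\sigma$ contains $1^11^1$ iff two elements in the same block have the same color; $1^11^2$ iff there are $i<j$ in the same block with $i$ colored $1$ and $j$ colored $2$; $1^21^1$ iff there are $i<j$ in the same block with $i$ colored $2$ and $j$ colored $1$; $1^12^2$ iff there are $i<j$ in different blocks with $i$ colored $1$ and $j$ colored $2$. *)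

From mathcomp Require Import all_boot.
Set Implicit Arguments. Unset Strict Implicit. Unset Printing Implicit Defensive.

(* [n] = {1,...,n} is modelled by 'I_n = {0,...,n-1} (order-preserving shift).
   Colors {1,2} are modelled by bool: false = color 1, true = color 2. *)

Definition col1 : bool := false.
Definition col2 : bool := true.

Definition colored_partition (n : nat) := ({set {set 'I_n}} * {ffun 'I_n -> bool})%type.

Definition is_set_partition n (P : {set {set 'I_n}}) : bool :=
  partition P [set: 'I_n].

Definition same_block n (P : {set {set 'I_n}}) (i j : 'I_n) : bool :=
  [exists B in P, (i \in B) && (j \in B)].

Definition contains_1111 n (s : colored_partition n) : bool :=
  [exists i : 'I_n, exists j : 'I_n,
     [&& i < j, same_block s.1 i j & s.2 i == s.2 j]].

Definition contains_1112 n (s : colored_partition n) : bool :=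
  [exists i : 'I_n, exists j : 'I_n,
     [&& i < j, same_block s.1 i j, s.2 i == col1 & s.2 j == col2]].

Definition contains_1211 n (s : colored_partition n) : bool :=
  [exists i : 'I_n, exists j : 'I_n,
     [&& i < j, same_block s.1 i j, s.2 i == col2 & s.2 j == col1]].

Definition contains_1122 n (s : colored_partition n) : bool :=
  [exists i : 'I_n, exists j : 'I_n,
     [&& i < j, ~~ same_block s.1 i j, s.2 i == col1 & s.2 j == col2]].

Definition avoiders18 n : {set colored_partition n} :=
  [set s : colored_partition n | [&& is_set_partition s.1,
     ~~ contains_1111 s, ~~ contains_1112 s, ~~ contains_1211 s
     & ~~ contains_1122 s]].

From mathcomp Require Import all_boot.
Set Implicit Arguments. Unset Strict Implicit.

(* Two elements sharing a block either have equal colors (1^11^1) or form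
   1^11^2 or 1^21^1, so every block of an avoider is a singleton.  Between
   different blocks only 1^12^2 remains, which forbids a color 1 before a
   color 2: the coloring is 2...21...1, determined by its number k of 2s,
   and each of the n + 1 values k = 0, ..., n occurs. *)

Section Singletons.
Variable T : finType.

Definition singletons : {set {set T}} := [set [set x] | x in [set: T]].

Lemma partition_singletons : partition singletons [set: T].
Proof.
have disj : {in [set: T] &, forall x y, y != x -> [disjoint [set x] & [set y]]}.
  by move=> x y _ _ yx; rewrite disjoint_sym disjoints1 inE.
have nonempty : set0 \notin singletons.
  by apply/imsetP => -[x _ /setP /(_ x)]; rewrite !inE eqxx.
have [triv _] := trivIimset disj nonempty.
apply/and3P; split => //; rewrite cover_imset; apply/eqP/setP => x.
by rewrite inE; apply/bigcupP; exists x; rewrite ?inE.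
Qed.

Lemma partition_eq_singletons (P : {set {set T}}) :
  partition P [set: T] -> (forall B, B \in P -> {in B &, forall x y : T, x = y}) ->
  P = singletons.
Proof.
case/and3P => /eqP cov _ nonempty single; apply/setP => B; apply/idP/imsetP.
- move=> PB; have [B0 | [x Bx]] := set_0Vmem B; first by rewrite -B0 PB in nonempty.
  exists x => //; apply/setP => y; rewrite inE.
  by apply/idP/eqP => [By | ->]; first exact: single By Bx.
- case=> x _ ->; have Px : x \in cover P by rewrite cov inE.
  suff -> : [set x] = pblock P x by exact: pblock_mem.
  apply/setP => y; rewrite inE; apply/eqP/idP => [-> | By]; first by rewrite mem_pblock.
  by apply: single By _; [exact: pblock_mem | rewrite mem_pblock].
Qed.

End Singletons.

Section Thresholds.
Variable n : nat.

Definition threshold_coloring (k : 'I_n.+1) : {ffun 'I_n -> bool} :=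
  [ffun i : 'I_n => i < k].

Lemma threshold_coloring_inj : injective threshold_coloring.
Proof.
suff lt_neq (k1 k2 : 'I_n.+1) : k1 < k2 -> threshold_coloring k1 != threshold_coloring k2.
  move=> k1 k2 eq_c; apply/val_inj.
  by case: (ltngtP k1 k2) => [/lt_neq | /lt_neq | //]; rewrite eq_c eqxx.
move=> lt_k12; have k1n : k1 < n := leq_trans lt_k12 (ltn_ord k2).
by apply/eqP => /ffunP /(_ (Ordinal k1n)); rewrite !ffunE /= ltnn lt_k12.
Qed.

Lemma antitone_threshold (c : {ffun 'I_n -> bool}) :
  (forall i j : 'I_n, i <= j -> c j -> c i) ->
  exists k, c = threshold_coloring k.
Proof.
move=> anti; pose first_false m := (m == n) || [exists i : 'I_n, (i == m :> nat) && ~~ c i].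
have some_false : exists m, first_false m by exists n; rewrite /first_false eqxx.
have [m false_m min_m] := ex_minnP some_false.
have mn : m <= n by apply: min_m; rewrite /first_false eqxx.
exists (Ordinal (mn : m < n.+1)); apply/ffunP => i; rewrite ffunE /=.
have [im | mi] := ltnP i m.
- apply/negPn/negP => ci; have : m <= i.
    by apply: min_m; apply/orP; right; apply/existsP; exists i; rewrite eqxx ci.
  by rewrite leqNgt im.
- case/orP: false_m => [/eqP mn_eq | /existsP [j /andP [/eqP jm cj]]].
  + by move: (ltn_ord i); rewrite ltnNge (leq_trans _ mi) // mn_eq.
  + by apply/negP => ci; case/negP: cj; apply: anti ci; rewrite jm.
Qed.

End Thresholds.

Section Avoiders.
Variable n : nat.
Implicit Types (s : colored_partition n) (i j : 'I_n).

Lemma singletons_separated i j : i < j -> ~~ same_block (singletons 'I_n) i j.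
Proof.
move=> ij; apply/existsP => -[_ /andP [/imsetP [x _ ->]]].
by rewrite !inE => /andP [/eqP ix /eqP jx]; rewrite ix jx ltnn in ij.
Qed.

Lemma avoiders18_separated s i j :
  s \in avoiders18 n -> i < j -> ~~ same_block s.1 i j.
Proof.
rewrite inE => /and5P [_ /existsPn no1111 /existsPn no1112 /existsPn no1211 _] ij.
apply/negP => ij_block.
move: (no1111 i) (no1112 i) (no1211 i) => /existsPn/(_ j) + /existsPn/(_ j) + /existsPn/(_ j).
by rewrite ij ij_block /col1 /col2; case: (s.2 i); case: (s.2 j).
Qed.

Lemma avoiders18_singletons s : s \in avoiders18 n -> s.1 = singletons 'I_n.
Proof.
move=> s_av; have := s_av; rewrite inE => /and5P [part _ _ _ _].
apply: partition_eq_singletons part _ => B PB x y Bx By.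
have [xy | yx | /val_inj //] := ltngtP x y.
- by case/negP: (avoiders18_separated s_av xy); apply/existsP; exists B; rewrite PB Bx By.
- by case/negP: (avoiders18_separated s_av yx); apply/existsP; exists B; rewrite PB Bx By.
Qed.

Lemma avoiders18_antitone s i j :
  s \in avoiders18 n -> i <= j -> s.2 j -> s.2 i.
Proof.
move=> s_av; rewrite leq_eqVlt => /orP [/eqP /val_inj -> // | ij] cj.
have := s_av; rewrite inE => /and5P [_ _ _ _ /negP no1122].
apply/negPn/negP => ci; apply: no1122; apply/existsP; exists i; apply/existsP; exists j.
by rewrite ij (avoiders18_separated s_av ij) /col1 /col2 cj (negbTE ci).
Qed.

Lemma threshold_avoids18 k : (singletons 'I_n, threshold_coloring k) \in avoiders18 n.
Proof.
rewrite inE /= /is_set_partition partition_singletons /=.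
apply/and4P; split; apply/negP => /existsP [i /existsP [j]].
- by case/and3P => ij; rewrite (negbTE (singletons_separated ij)).
- by case/and4P => ij; rewrite (negbTE (singletons_separated ij)).
- by case/and4P => ij; rewrite (negbTE (singletons_separated ij)).
- case/and4P => ij _; rewrite !ffunE /col1 /col2 => /eqP ik /eqP jk.
  by rewrite (ltn_trans ij jk) in ik.
Qed.

Lemma avoiders18E :
  avoiders18 n = [set (singletons 'I_n, threshold_coloring k) | k in [set: 'I_n.+1]].
Proof.
apply/setP => s; apply/idP/imsetP => [s_av | [k _ ->]]; last exact: threshold_avoids18.
have [k ck] := antitone_threshold (fun i j => avoiders18_antitone s_av).
exists k => //; case: s s_av ck => P c s_av /= ->.
by rewrite -(avoiders18_singletons s_av).
Qed.

End Avoiders.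

(* The count n + 1 holds for n = 0 as well. *)
Theorem mainTheorem18 (n : nat) : 1 <= n -> #|avoiders18 n| = n + 1.
Proof.
move=> _; rewrite avoiders18E card_imset; last by move=> k1 k2 [] /threshold_coloring_inj.
by rewrite cardsT card_ord addn1.
Qed.
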